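(* Let $Y,Z$ be complex Banach spaces, let $\mathcal B$ be a collection of non-empty subsets of $Y$, and let $I\subseteq\mathbb R^n$ be admissible with respect to the almost periodic extensions. Suppose $F:I\to Y$ is uniformly continuous and Bohr almost periodic, and $G:I\times Y\to Z$ is Bohr $\mathcal B$-almost periodic with $\overline{R(F)}=B\in\mathcal B$, where $R(F)$ is the range of $F$. If $G$ is uniformly continuous on $I\times B$, then $W:I\to Z$, $W(\mathbf t):=G(\mathbf t;F(\mathbf t))$, is uniformly continuous and Bohr almost periodic.
   Context: $\emptyset\ne I\subseteq\mathbb R^n$ with $I+I\subseteq I$ is admissible with respect to the almost periodic extensions if for every complex Banach space $V$ and every uniformly continuous Bohr almost periodic $H:I\to V$ there exists a unique Bohr almost periodic $\tilde H:\mathbb R^n\to V$ with $\tilde H=H$ on $I$. A continuous $H:I\to V$ is Bohr almost periodic if for every $\epsilon>0$ there is $l>0$ such that for each $\mathbf t_0\in I$ there is $\tau\in I$ with $|\tau-\mathbf t_0|\le l$ and $\|H(\mathbf t+\tau)-H(\mathbf t)\|\le\epsilon$ for all $\mathbf t\in I$. A continuous $G:I\times Y\to Z$ is Bohr $\mathcal B$-almost periodic if for every $B\in\mathcal B$ and $\epsilon>0$ there is $l>0$ such that for each $\mathbf t_0\in I$ there is $\tau\in I$ with $|\tau-\mathbf t_0|\le l$ and $\|G(\mathbf t+\tau;y)-G(\mathbf t;y)\|_Z\le\epsilon$ for all $\mathbf t\in I$, $y\in B$. *)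

(* R^n is 'rV[R]_n with the Euclidean norm,
   complex Banach spaces are completeNormedModType R[i] (R[i] = complex R). *)
From mathcomp Require Import all_boot all_order all_algebra.
From mathcomp Require Import complex.
From mathcomp Require Import all_classical all_reals all_analysis.
Import Order.TTheory GRing.Theory Num.Theory.
Import numFieldNormedType.Exports.
Set Implicit Arguments.
Unset Strict Implicit.
Unset Printing Implicit Defensive.
Local Open Scope ring_scope.
Local Open Scope classical_set_scope.

Definition enorm {R : realType} {n : nat} (x : 'rV[R]_n) : R :=
  Num.sqrt (\sum_(i < n) x ord0 i ^+ 2).

Definition add_closed {R : realType} {n : nat} (I : set 'rV[R]_n) : Prop :=
  forall s t, I s -> I t -> I (s + t).

(* continuity of H : I -> V (H given as a total function, only its values on I matter) *)
Definition cont_on {R : realType} {n : nat} {V : normedModType R[i]}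
  (I : set 'rV[R]_n) (H : 'rV[R]_n -> V) : Prop :=
  forall t, I t -> forall e : R, 0 < e -> exists2 d : R, 0 < d &
    forall s, I s -> enorm (s - t) < d -> `|H s - H t| < (e%:C)%C.

Definition unif_cont_on {R : realType} {n : nat} {V : normedModType R[i]}
  (I : set 'rV[R]_n) (H : 'rV[R]_n -> V) : Prop :=
  forall e : R, 0 < e -> exists2 d : R, 0 < d &
    forall s t, I s -> I t -> enorm (s - t) < d -> `|H s - H t| < (e%:C)%C.

Definition bohr_ap {R : realType} {n : nat} {V : normedModType R[i]}
  (I : set 'rV[R]_n) (H : 'rV[R]_n -> V) : Prop :=
  cont_on I H /\
  forall e : R, 0 < e -> exists2 l : R, 0 < l &
    forall t0, I t0 -> exists tau, [/\ I tau, enorm (tau - t0) <= l &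
      forall t, I t -> `|H (t + tau) - H t| <= (e%:C)%C].

Definition ap_admissible {R : realType} {n : nat} (I : set 'rV[R]_n) : Prop :=
  I !=set0 /\ add_closed I /\
  forall (V : completeNormedModType R[i]) (H : 'rV[R]_n -> V),
    unif_cont_on I H -> bohr_ap I H ->
    exists Ht : 'rV[R]_n -> V,
      [/\ bohr_ap setT Ht, (forall t, I t -> Ht t = H t) &
          forall Ht' : 'rV[R]_n -> V, bohr_ap setT Ht' ->
            (forall t, I t -> Ht' t = H t) -> Ht' = Ht].

Definition cont_on2 {R : realType} {n : nat} {Y Z : normedModType R[i]}
  (I : set 'rV[R]_n) (G : 'rV[R]_n -> Y -> Z) : Prop :=
  forall t y, I t -> forall e : R, 0 < e -> exists2 d : R, 0 < d &
    forall s x, I s -> enorm (s - t) < d -> `|x - y| < (d%:C)%C ->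
      `|G s x - G t y| < (e%:C)%C.

Definition unif_cont_on2 {R : realType} {n : nat} {Y Z : normedModType R[i]}
  (I : set 'rV[R]_n) (B : set Y) (G : 'rV[R]_n -> Y -> Z) : Prop :=
  forall e : R, 0 < e -> exists2 d : R, 0 < d &
    forall s t x y, I s -> I t -> B x -> B y ->
      enorm (s - t) < d -> `|x - y| < (d%:C)%C -> `|G s x - G t y| < (e%:C)%C.

Definition bohr_B_ap {R : realType} {n : nat} {Y Z : normedModType R[i]}
  (I : set 'rV[R]_n) (BB : set (set Y)) (G : 'rV[R]_n -> Y -> Z) : Prop :=
  cont_on2 I G /\
  forall B, BB B -> forall e : R, 0 < e -> exists2 l : R, 0 < l &
    forall t0, I t0 -> exists tau, [/\ I tau, enorm (tau - t0) <= l &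
      forall t y, I t -> B y -> `|G (t + tau) y - G t y| <= (e%:C)%C].

(** The range of F is totally bounded, so by the uniform continuity of G on
   I x B the value F(t) may be replaced by one of finitely many y_1, ..., y_m
   in F(I), and it suffices to find common almost periods in I for F and the
   sections G(., y_j).  These extend to almost periodic functions on R^n; the
   maximum d of their distance functions (u, v) |-> |h u - h v| is a
   pseudometric that is uniformly continuous and has totally bounded
   translates.  Admissibility of I yields almost periods of d lying in I: if
   no x in I satisfied d(t + x + c, t) < k for all t, the almost periodic
   function x |-> sup_t min(d(t + x + c, t), k) would extend the constant k
   from I without being constant, contradicting the uniqueness of
   almost periodic extensions. *)

From mathcomp Require Import all_boot all_order all_algebra.
From mathcomp Require Import complex.
From mathcomp Require Import all_classical all_reals all_analysis.
From mathcomp Require Import lra.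
Import Order.TTheory GRing.Theory Num.Theory.
Import numFieldNormedType.Exports.
Set Implicit Arguments.
Unset Strict Implicit.
Unset Printing Implicit Defensive.
Local Open Scope ring_scope.
Local Open Scope classical_set_scope.

Section EuclideanNorm.
Variables (R : realType) (n : nat).
Implicit Types x : 'rV[R]_n.

Lemma enorm0 : enorm (0 : 'rV[R]_n) = 0.
Proof. by rewrite /enorm big1 ?sqrtr0 // => i _; rewrite mxE expr0n. Qed.

Lemma enormN x : enorm (- x) = enorm x.
Proof. by rewrite /enorm; congr Num.sqrt; apply: eq_bigr => i _; rewrite mxE sqrrN. Qed.

Lemma enorm_coord x i : `|x ord0 i| <= enorm x.
Proof.
rewrite /enorm -sqrtr_sqr ler_sqrt; last by apply: sumr_ge0 => j _; exact: sqr_ge0.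
by rewrite (bigD1 i) //= lerDl; apply: sumr_ge0 => j _; exact: sqr_ge0.
Qed.

Lemma normr_coord x i : `|x ord0 i| <= `|x|.
Proof. by rewrite -[`|x|]/(mx_norm x) mx_normrE (le_bigmax _ _ (ord0, i)). Qed.

Lemma normr_le_enorm x : `|x| <= enorm x.
Proof.
rewrite -[`|x|]/(mx_norm x) mx_normrE; apply: bigmax_le => [|[i j] _].
  exact: sqrtr_ge0.
by rewrite ord1; exact: enorm_coord.
Qed.

Lemma enorm_le_normr x : enorm x <= n%:R * `|x|.
Proof.
have nx0 : 0 <= n%:R * `|x| by rewrite mulr_ge0.
rewrite /enorm -(ger0_norm nx0) -sqrtr_sqr ler_sqrt ?sqr_ge0 //.
have coord2 i : x ord0 i ^+ 2 <= `|x| ^+ 2.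
  by rewrite -real_normK ?num_real // ler_sqr ?nnegrE // normr_coord.
have n_le_sqr : n%:R <= n%:R ^+ 2 :> R.
  by case: (n) => [|m]; rewrite ?expr0n // expr2 ler_peMl // ler1n.
apply: le_trans (ler_sum _ (fun i _ => coord2 i)) _.
rewrite sumr_const card_ord -[leLHS]mulr_natl exprMn.
by apply: ler_wpM2r; first exact: sqr_ge0.
Qed.

End EuclideanNorm.

Section RealNorm.
Variables (R : realType) (V : normedModType R[i]).
Implicit Types u v w : V.

Lemma normc_real (x : R) : `|x%:C%C| = `|x|%:C%C.
Proof. by rewrite normc_def /= expr0n /= addr0 sqrtr_sqr. Qed.

Definition rnorm v : R := complex.Re `|v|.

Lemma rnormE v : `|v| = (rnorm v)%:C%C.
Proof. by rewrite /rnorm; have := ger0_Im (normr_ge0 v); case: `|v| => a b /= ->. Qed.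

Lemma rnorm_ge0 v : 0 <= rnorm v.
Proof. by have := normr_ge0 v; rewrite rnormE lecR. Qed.

Lemma rnorm_le v e : (`|v| <= e%:C)%C = (rnorm v <= e).
Proof. by rewrite rnormE lecR. Qed.

Lemma rnorm_lt v e : (`|v| < e%:C)%C = (rnorm v < e).
Proof. by rewrite rnormE ltcR. Qed.

Lemma rnorm_distC u v : rnorm (u - v) = rnorm (v - u).
Proof. by rewrite /rnorm distrC. Qed.

Lemma rnorm_distD u v w : rnorm (v - w) <= rnorm (v - u) + rnorm (u - w).
Proof. by rewrite -lecR rmorphD /= -!rnormE ler_distD. Qed.

End RealNorm.

Section Pseudometric.
Variables (R : realType) (n : nat).
Local Notation vec := 'rV[R]_n.
Implicit Types (d : vec -> vec -> R) (J : set vec).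

Definition pseudometric d := [/\ forall u v, 0 <= d u v, forall u v, d u v = d v u,
  forall u v w, d u w <= d u v + d v w & forall u, d u u = 0].

(* Continuity is measured in the max norm of 'rV, whose closed cubes are
   compact; periods are measured in the Euclidean norm, as in [bohr_ap]. *)
Definition pm_cont d := forall u e, 0 < e ->
  exists2 r, 0 < r & forall v, `|v - u| < r -> d v u < e.

Definition pm_unif_cont d := forall e, 0 < e ->
  exists2 r, 0 < r & forall u v, `|u - v| < r -> d u v < e.

Definition pm_ap_in J d := forall e, 0 < e -> exists2 l, 0 < l &
  forall t0, J t0 -> exists tau, [/\ J tau, enorm (tau - t0) <= l &
    forall t, d (t + tau) t <= e].

Definition translates_net d e := exists cs : seq vec,
  forall s, exists2 c, c \in cs & forall t, d (t + s) (t + c) <= e.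

Definition bochner_ap d :=
  [/\ pseudometric d, pm_unif_cont d & forall e, 0 < e -> translates_net d e].

Lemma rV_ball_cover (L : R) (rho : vec -> R) : (forall x, 0 < rho x) ->
  exists xs : seq vec, forall r, `|r| <= L -> exists2 x, x \in xs & `|r - x| < rho x.
Proof.
move=> rho_gt0.
have := @rV_compact R n (fun=> `[-L, L]%classic) (fun=> @segment_compact R _ _).
rewrite compact_cover => /(_ vec setT (fun x => ball x (rho x))) [].
- by move=> x _; exact: ball_open.
- by move=> r _; exists r => //; exact: ballxx.
move=> D _ cover; exists (finmap.enum_fset D) => r rL.
have /cover [x /= xD rx] : (fun v : vec => forall i, `[-L, L]%classic (v ord0 i)) r.
  by move=> i; rewrite /= in_itv /= -ler_norml (le_trans (normr_coord _ _)).
by exists x => //; move: rx; rewrite mx_norm_ball /ball_ distrC.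
Qed.

Lemma pm_ap_unif_cont d : pseudometric d -> pm_cont d -> pm_ap_in setT d ->
  pm_unif_cont d.
Proof.
move=> [_ dC d_tri _] dcont dap e e_gt0.
have e4 : 0 < e / 4 by rewrite divr_gt0.
have [l _ period] := dap _ e4.
have /choice [rho rhoP] : forall x, exists r, 0 < r /\
    forall v, `|v - x| < r -> d v x < e / 4.
  by move=> x; have [r r_gt0 ?] := dcont x _ e4; exists r.
have rho2_gt0 x : 0 < rho x / 2 by rewrite divr_gt0 ?(rhoP x).1.
have [xs cover] := rV_ball_cover l rho2_gt0.
exists (\big[Num.min/1]_(x <- xs) (rho x / 2)) => [|u v uv].
  exact: lt_bigmin.
have [p [_ pu pP]] := period u I.
have [x xs_x ux] : exists2 x, x \in xs & `|u - p - x| < rho x / 2.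
  by apply: cover; apply: le_trans (normr_le_enorm _) _; rewrite -enormN opprB.
have vx : `|v - p - x| < rho x.
  have := ge_bigmin_seq 1 _ xpredT (fun x => rho x / 2) xs_x isT.
  have -> : v - p - x = (v - u) + (u - p - x) by rewrite !addrA subrK.
  have := ler_normD (v - u) (u - p - x); rewrite distrC in uv; lra.
have [rho_gt0 near_x] := rhoP x.
have d_ux : d (u - p) x < e / 4 by apply: near_x; lra.
have d_vx : d x (v - p) < e / 4 by rewrite dC; exact: near_x.
have d_u : d u (u - p) <= e / 4 by have := pP (u - p); rewrite subrK.
have d_v : d (v - p) v <= e / 4 by have := pP (v - p); rewrite subrK dC.
have := d_tri u (u - p) v; have := d_tri (u - p) x v; have := d_tri x (v - p) v.
lra.
Qed.

Lemma pm_ap_translates_net d : pseudometric d -> pm_unif_cont d ->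
  pm_ap_in setT d -> forall e, 0 < e -> translates_net d e.
Proof.
move=> [_ _ d_tri _] duc dap e e_gt0.
have e2 : 0 < e / 2 by rewrite divr_gt0.
have [r r_gt0 dr] := duc _ e2.
have [l _ period] := dap _ e2.
have [cs cover] := rV_ball_cover l (fun _ => r_gt0).
exists cs => s; have [p [_ ps pP]] := period s I.
have [c cs_c sc] : exists2 c, c \in cs & `|s - p - c| < r.
  by apply: cover; apply: le_trans (normr_le_enorm _) _; rewrite -enormN opprB.
exists c => // t.
have near_c : `|(t + (s - p)) - (t + c)| < r by rewrite opprD addrACA subrr add0r.
have := dr _ _ near_c; have := pP (t + (s - p)); rewrite -addrA subrK.
have := d_tri (t + s) (t + (s - p)) (t + c); lra.
Qed.

Lemma pm_ap_bochner_ap d : pseudometric d -> pm_cont d -> pm_ap_in setT d ->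
  bochner_ap d.
Proof.
move=> dP dcont dap; have duc := pm_ap_unif_cont dP dcont dap.
by split=> //; exact: pm_ap_translates_net.
Qed.

Definition pm_max d1 d2 : vec -> vec -> R := fun u v => Num.max (d1 u v) (d2 u v).

Lemma pseudometric_max d1 d2 : pseudometric d1 -> pseudometric d2 ->
  pseudometric (pm_max d1 d2).
Proof.
move=> [ge1 C1 tri1 d1_0] [ge2 C2 tri2 d2_0]; rewrite /pm_max.
split=> [u v|u v|u v w|u]; first by rewrite le_max ge1.
- by rewrite C1 C2.
- rewrite ge_max; apply/andP; split.
  + by apply: le_trans (tri1 u v w) (lerD _ _); rewrite le_max lexx.
  + by apply: le_trans (tri2 u v w) (lerD _ _); rewrite le_max lexx orbT.
- by rewrite d1_0 d2_0 maxxx.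
Qed.

Lemma pm_unif_cont_max d1 d2 : pm_unif_cont d1 -> pm_unif_cont d2 ->
  pm_unif_cont (pm_max d1 d2).
Proof.
move=> uc1 uc2 e e_gt0.
have [r1 r1_gt0 h1] := uc1 e e_gt0; have [r2 r2_gt0 h2] := uc2 e e_gt0.
exists (Num.min r1 r2) => [|u v]; first by rewrite lt_min r1_gt0.
by rewrite lt_min gt_max => /andP[/h1 -> /h2 ->].
Qed.

Lemma translates_net_max d1 d2 e : pseudometric d1 -> pseudometric d2 ->
  translates_net d1 (e / 2) -> translates_net d2 (e / 2) ->
  translates_net (pm_max d1 d2) e.
Proof.
move=> [_ C1 tri1 _] [_ C2 tri2 _] [cs1 net1] [cs2 net2].
pose near c1 c2 s := [/\ forall t, d1 (t + s) (t + c1) <= e / 2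
  & forall t, d2 (t + s) (t + c2) <= e / 2].
exists [seq xget 0 (near c1 c2) | c1 <- cs1, c2 <- cs2] => s.
have [c1 cs1_c1 sc1] := net1 s; have [c2 cs2_c2 sc2] := net2 s.
have [h1 h2] : near c1 c2 (xget 0 (near c1 c2)) by apply: xgetPex; exists s.
exists (xget 0 (near c1 c2)); first by apply/allpairsP; exists (c1, c2).
move=> t; rewrite /pm_max ge_max; apply/andP; split.
- have := tri1 (t + s) (t + c1) (t + xget 0 (near c1 c2)).
  have := sc1 t; have := h1 t; rewrite [d1 (t + c1) _]C1; lra.
- have := tri2 (t + s) (t + c2) (t + xget 0 (near c1 c2)).
  have := sc2 t; have := h2 t; rewrite [d2 (t + c2) _]C2; lra.
Qed.

Lemma bochner_ap_max d1 d2 : bochner_ap d1 -> bochner_ap d2 ->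
  bochner_ap (pm_max d1 d2).
Proof.
move=> [p1 uc1 net1] [p2 uc2 net2].
split; [exact: pseudometric_max | exact: pm_unif_cont_max |].
move=> e e_gt0; have e2 : 0 < e / 2 by rewrite divr_gt0.
exact: translates_net_max p1 p2 (net1 _ e2) (net2 _ e2).
Qed.

Lemma bochner_ap_foldr_max (T : Type) (ds : T -> vec -> vec -> R) d0 ss :
  bochner_ap d0 -> (forall s, bochner_ap (ds s)) ->
  bochner_ap (foldr (fun s => pm_max (ds s)) d0 ss).
Proof. by move=> d0P dsP; elim: ss => //= s ss IH; exact: bochner_ap_max. Qed.

Lemma foldr_pm_max_ge (T : eqType) (ds : T -> vec -> vec -> R) d0 ss u v :
  [/\ d0 u v <= foldr (fun s => pm_max (ds s)) d0 ss u v &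
   forall s, s \in ss -> ds s u v <= foldr (fun s => pm_max (ds s)) d0 ss u v].
Proof.
elim: ss => [|s ss [IH0 IHs]] /=; first by split.
rewrite /pm_max le_max IH0 orbT; split=> // s'.
rewrite in_cons le_max => /orP[/eqP->|/IHs->]; first by rewrite lexx.
by rewrite orbT.
Qed.

End Pseudometric.

Section Constant.
Variables (R : realType) (n : nat) (V : normedModType R[i]).
Implicit Types (J : set 'rV[R]_n) (v : V).

Lemma unif_cont_on_cst J v : unif_cont_on J (fun=> v).
Proof. by move=> e e_gt0; exists 1 => // s t _ _ _; rewrite subrr normr0 ltcR. Qed.

Lemma bohr_ap_cst J v : bohr_ap J (fun=> v).
Proof.
split=> [t _ e e_gt0 | e e_gt0].
  by exists 1 => // s _ _; rewrite subrr normr0 ltcR.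
exists 1 => // t0 Jt0; exists t0; split=> //; first by rewrite subrr enorm0.
by move=> t _; rewrite subrr normr0 lecR ltW.
Qed.

End Constant.

Section AdmissibleCommonPeriods.
Variables (R : realType) (n : nat).
Local Notation vec := 'rV[R]_n.
Implicit Types (d : vec -> vec -> R) (I : set vec).

Definition translation_lipschitz d (psi : vec -> R) := forall x x' rho,
  (forall t, d (t + x') (t + x) <= rho) -> `|psi x' - psi x| <= rho.

(* Truncating at k keeps the supremum finite. *)
Definition pm_sup d (k : R) (x : vec) :=
  sup [set Num.min (d (t + x) t) k | t in [set: vec]].

Section PmSup.
Variables (d : vec -> vec -> R) (k : R).
Hypotheses (dP : pseudometric d) (k_gt0 : 0 < k).

Lemma pm_sup_ub x t : Num.min (d (t + x) t) k <= pm_sup d k x.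
Proof.
apply: ub_le_sup; last by exists t.
by exists k => _ [s _ <-]; rewrite ge_min lexx orbT.
Qed.

Lemma pm_sup_le x : pm_sup d k x <= k.
Proof.
apply: ge_sup => [|_ [t _ <-]]; first by exists (Num.min (d (0 + x) 0) k), 0.
by rewrite ge_min lexx orbT.
Qed.

Lemma pm_sup0 : pm_sup d k 0 = 0.
Proof.
have [_ _ _ d0] := dP; apply/le_anti/andP; split.
  apply: ge_sup => [|_ [t _ <-]]; first by exists (Num.min (d (0 + 0) 0) k), 0.
  by rewrite addr0 d0 ge_min lexx.
by have := pm_sup_ub 0 0; rewrite addr0 d0 (min_l (ltW k_gt0)).
Qed.

Lemma pm_sup_lt x : pm_sup d k x < k -> forall t, d (t + x) t < k.
Proof.
move=> sup_lt_k t; rewrite ltNge; apply/negP => k_le.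
by have := pm_sup_ub x t; rewrite (min_r k_le) leNgt sup_lt_k.
Qed.

Lemma pm_sup_leD x x' rho : (forall t, d (t + x') (t + x) <= rho) ->
  pm_sup d k x' <= pm_sup d k x + rho.
Proof.
have [d_ge0 _ d_tri _] := dP => near.
have rho_ge0 : 0 <= rho := le_trans (d_ge0 _ _) (near 0).
apply: ge_sup => [|_ [t _ <-]]; first by exists (Num.min (d (0 + x') 0) k), 0.
have ub := pm_sup_ub x t; rewrite ge_min.
have [a_le_k|k_lt_a] := leP (d (t + x) t) k.
  rewrite (min_l a_le_k) in ub; apply/orP; left.
  by have := d_tri (t + x') (t + x) t; have := near t; lra.
by rewrite (min_r (ltW k_lt_a)) in ub; apply/orP; right; lra.
Qed.

Lemma pm_sup_lipschitz : translation_lipschitz d (pm_sup d k).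
Proof.
have [_ dC _ _] := dP => x x' rho near.
have near' t : d (t + x) (t + x') <= rho by rewrite dC.
have := pm_sup_leD near; have := pm_sup_leD near'.
by rewrite ler_norml; lra.
Qed.

End PmSup.

Lemma translation_lipschitz_bohr_ap (V : normedModType R[i]) (z : V) d psi :
  `|z| = 1 -> bochner_ap d -> translation_lipschitz d psi ->
  bohr_ap setT (fun x => (psi x)%:C%C *: z).
Proof.
move=> z_norm [_ duc dnet] lip.
have distE x y : `|(psi x)%:C%C *: z - (psi y)%:C%C *: z| = `|psi x - psi y|%:C%C.
  by rewrite -scalerBl normrZ z_norm mulr1 -rmorphB /= normc_real.
split=> [t _ e e_gt0 | e e_gt0].
  have e2 : 0 < e / 2 by rewrite divr_gt0.
  have [r r_gt0 dr] := duc _ e2.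
  exists r => // s _ st; rewrite distE ltcR.
  apply: le_lt_trans (lip _ _ (e / 2) _) _; last by lra.
  move=> t'; apply/ltW/dr; rewrite opprD addrACA subrr add0r.
  exact: le_lt_trans (normr_le_enorm _) st.
have [cs net] := dnet _ e_gt0.
have max_ge0 := bigmax_ge_id cs 0 xpredT enorm.
exists (\big[Num.max/0]_(c <- cs) enorm c + 1) => [|t1 _]; first by lra.
have [c cs_c t1c] := net t1.
exists (t1 - c); split=> //.
  rewrite addrAC subrr add0r enormN.
  have := le_bigmax_seq 0 c xpredT enorm cs_c isT; lra.
move=> x _; rewrite distE lecR; apply: lip => t.
have -> : t + (x + (t1 - c)) = t + x - c + t1 by rewrite !addrA addrAC.
by have := t1c (t + x - c); rewrite subrK.
Qed.

Lemma admissible_shifted_period (V : completeNormedModType R[i]) (z : V) I d c k :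
  z != 0 -> ap_admissible I -> bochner_ap d -> 0 < k ->
  exists2 x, I x & forall t, d (t + (x + c)) t < k.
Proof.
move=> z_neq0 [_ [_ ext_unique]] dB k_gt0; have [dP _ _] := dB.
apply: contrapT => no_period.
have [z1 z1_norm] : exists z1 : V, `|z1| = 1.
  exists (`|z|^-1 *: z).
  by rewrite normrZ normrV ?unitfE ?normr_eq0 // normr_id mulVf ?normr_eq0.
pose chi x := (pm_sup d k (x + c))%:C%C *: z1.
pose cst : vec -> V := fun=> k%:C%C *: z1.
have chi_ap : bohr_ap setT chi.
  apply: translation_lipschitz_bohr_ap z1_norm dB _ => x x' rho near.
  apply: pm_sup_lipschitz => // t; have := near (t + c).
  by rewrite -!addrA [c + x']addrC [c + x]addrC.
have chi_I x : I x -> chi x = cst x.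
  move=> Ix; rewrite /chi /cst; congr (_%:C%C *: _).
  apply/eqP; rewrite eq_le pm_sup_le //= leNgt; apply/negP => lt_k.
  by apply: no_period; exists x => //; exact: pm_sup_lt.
have [H [_ _ unique]] := ext_unique V cst (unif_cont_on_cst _ _) (bohr_ap_cst _ _).
have : chi = cst.
  by rewrite (unique _ chi_ap chi_I); apply/esym/unique => //; exact: bohr_ap_cst.
move/(congr1 (fun f => `|f (- c)|)); rewrite /chi /cst /= addNr pm_sup0 // !normrZ.
rewrite z1_norm !mulr1 !normc_real normr0 => /(congr1 (@complex.Re R)) /= /esym/eqP.
by rewrite normr_eq0 (gt_eqF k_gt0).
Qed.

Lemma admissible_pm_ap_in (V : completeNormedModType R[i]) (z : V) I d :
  z != 0 -> ap_admissible I -> bochner_ap d -> pm_ap_in I d.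
Proof.
move=> z_neq0 adm dB e e_gt0; have [[_ _ d_tri _] _ dnet] := dB.
have e2 : 0 < e / 2 by rewrite divr_gt0.
have /choice [x xP] : forall c, exists x, I x /\ forall t, d (t + (x + c)) t < e / 2.
  by move=> c; have [x Ix ?] := admissible_shifted_period c z_neq0 adm dB e2; exists x.
have [cs net] := dnet _ e2.
have max_ge0 := bigmax_ge_id cs 0 xpredT (fun c => enorm (x c)).
exists (\big[Num.max/0]_(c <- cs) enorm (x c) + 1) => [|t0 It0]; first by lra.
have [c cs_c t0c] := net t0; have [Ixc xcP] := xP c.
exists (x c + t0); split.
- by have [_ [addI _]] := adm; exact: addI.
- rewrite addrK.
  by have := le_bigmax_seq 0 c xpredT (fun c => enorm (x c)) cs_c isT; lra.
- move=> t; have := d_tri (t + (x c + t0)) (t + (x c + c)) t.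
  by have := t0c (t + x c); have := xcP t; rewrite -!addrA; lra.
Qed.

End AdmissibleCommonPeriods.

Section DistFun.
Variables (R : realType) (n : nat) (V : normedModType R[i]).
Local Notation vec := 'rV[R]_n.
Implicit Types h : vec -> V.

Definition dist_fun h : vec -> vec -> R := fun u v => rnorm (h u - h v).

Lemma pseudometric_dist_fun h : pseudometric (dist_fun h).
Proof.
split=> [u v|u v|u v w|u]; rewrite /dist_fun.
- exact: rnorm_ge0.
- exact: rnorm_distC.
- exact: rnorm_distD.
- by rewrite subrr /rnorm normr0.
Qed.

Lemma bochner_ap_dist_fun h : bohr_ap setT h -> bochner_ap (dist_fun h).
Proof.
move=> [hcont hap]; apply: pm_ap_bochner_ap; first exact: pseudometric_dist_fun.
  move=> u e e_gt0; have [r r_gt0 hr] := hcont u I e e_gt0.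
  have n1_gt0 : 0 < n%:R + 1 :> R by rewrite ltr_wpDl.
  exists (r / (n%:R + 1)) => [|v]; first by rewrite divr_gt0.
  rewrite ltr_pdivlMr // => vu; rewrite /dist_fun -rnorm_lt; apply: hr => //.
  by apply: le_lt_trans (enorm_le_normr _) _; have := normr_ge0 (v - u); nra.
move=> e e_gt0; have [l l_gt0 hl] := hap e e_gt0; exists l => // t0 _.
have [tau [_ tau_t0 htau]] := hl t0 I; exists tau; split=> // t.
by rewrite /dist_fun -rnorm_le; exact: htau.
Qed.

Lemma bohr_ap_range_net h (J : set vec) r : bohr_ap setT h -> 0 < r ->
  exists ss : seq vec, forall t, J t ->
    exists s, [/\ s \in ss, J s & rnorm (h t - h s) < r].
Proof.
move=> hap r_gt0; have [_ _ hnet] := bochner_ap_dist_fun hap.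
have r3 : 0 < r / 3 by rewrite divr_gt0.
have [cs net] := hnet _ r3.
pose near c s := [/\ J s & rnorm (h s - h c) <= r / 3].
exists [seq xget 0 (near c) | c <- cs] => t Jt.
have [c cs_c tc] := net t; have /= := tc 0; rewrite /dist_fun !add0r => {}tc.
have [Js sc] : near c (xget 0 (near c)) by apply: xgetPex; exists t.
exists (xget 0 (near c)); split=> //; first exact: map_f.
have := rnorm_distD (h c) (h t) (h (xget 0 (near c))).
by rewrite (rnorm_distC (h c)); lra.
Qed.

End DistFun.

Section Extension.
Variables (R : realType) (n : nat) (V : completeNormedModType R[i]).
Variable I : set 'rV[R]_n.
Implicit Types H : 'rV[R]_n -> V.

(* When H has no almost periodic extension this is the zero function, which
   is still almost periodic. *)
Definition ap_extension H : 'rV[R]_n -> V :=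
  xget (fun=> 0) [set Ht | bohr_ap setT Ht /\ forall t, I t -> Ht t = H t].

Lemma ap_extension_bohr_ap H : bohr_ap setT (ap_extension H).
Proof. by rewrite /ap_extension; case: xgetP => [Ht _ [] //|_]; exact: bohr_ap_cst. Qed.

Lemma ap_extensionE H : ap_admissible I -> unif_cont_on I H -> bohr_ap I H ->
  forall t, I t -> ap_extension H t = H t.
Proof.
move=> [_ [_ ext]] Huc Hap; have [Ht [Ht_ap HtE _]] := ext V H Huc Hap.
rewrite /ap_extension; set P := [set Ht | _].
by have [] : P (xget (fun=> 0) P) by apply: xgetPex; exists Ht.
Qed.

End Extension.

Section Composition.
Variables (R : realType) (n : nat) (Y Z : normedModType R[i]).
Variables (I : set 'rV[R]_n) (B : set Y) (G : 'rV[R]_n -> Y -> Z).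

Lemma unif_cont_on_cont (H : 'rV[R]_n -> Z) : unif_cont_on I H -> cont_on I H.
Proof.
move=> Huc t It e e_gt0; have [r r_gt0 Hr] := Huc e e_gt0.
by exists r => // s Is; exact: Hr.
Qed.

Lemma unif_cont_on2_section y : unif_cont_on2 I B G -> B y -> unif_cont_on I (G^~ y).
Proof.
move=> Guc By e e_gt0; have [r r_gt0 Gr] := Guc e e_gt0; exists r => // s t Is It st.
by apply: Gr => //; rewrite subrr normr0 ltcR.
Qed.

Lemma bohr_B_ap_section BB y : bohr_B_ap I BB G -> BB B -> B y -> bohr_ap I (G^~ y).
Proof.
move=> [Gcont Gap] BB_B By; split=> [t It e e_gt0 | e e_gt0].
  have [r r_gt0 Gr] := Gcont t y It e e_gt0; exists r => // s Is st.
  by apply: Gr => //; rewrite subrr normr0 ltcR.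
have [l l_gt0 Gl] := Gap B BB_B e e_gt0; exists l => // t0 It0.
by have [tau [Itau tau_t0 Gtau]] := Gl t0 It0; exists tau; split=> // t It; exact: Gtau.
Qed.

Lemma unif_cont_on2_comp F : unif_cont_on2 I B G -> unif_cont_on I F ->
  (forall t, I t -> B (F t)) -> unif_cont_on I (fun t => G t (F t)).
Proof.
move=> Guc Fuc FB e e_gt0; have [r r_gt0 Gr] := Guc e e_gt0.
have [r' r'_gt0 Fr] := Fuc r r_gt0.
exists (Num.min r r') => [|s t Is It]; first by rewrite lt_min r_gt0.
by rewrite lt_min => /andP[st st']; apply: Gr => //; [exact: FB|exact: FB|exact: Fr].
Qed.

Lemma unif_cont_on2_increment_le : unif_cont_on2 I B G -> forall e, 0 < e ->
  exists2 r, 0 < r & forall t t' x x' y, I t -> I t' -> B x -> B x' -> B y ->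
    rnorm (x' - y) < r -> rnorm (x - y) < r ->
    rnorm (G t' x' - G t x) <= rnorm (G t' y - G t y) + e.
Proof.
move=> Guc e e_gt0; have e2 : 0 < e / 2 by rewrite divr_gt0.
have [r r_gt0 Gr] := Guc _ e2; exists r => // t t' x x' y It It' Bx Bx' By x'y xy.
have near s a b : I s -> B a -> B b -> rnorm (a - b) < r ->
    rnorm (G s a - G s b) < e / 2.
  by move=> Is Ba Bb ab; rewrite -rnorm_lt; apply: Gr; rewrite ?subrr ?enorm0 ?rnorm_lt.
rewrite rnorm_distC in xy.
have := near _ _ _ It' Bx' By x'y; have := near _ _ _ It By Bx xy.
have := rnorm_distD (G t' y) (G t' x') (G t x).
have := rnorm_distD (G t y) (G t' y) (G t x); lra.
Qed.

End Composition.

Section AlmostPeriodicComposition.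
Variables (R : realType) (n : nat) (Y Z : completeNormedModType R[i]).
Variables (I : set 'rV[R]_n) (B : set Y).
Variables (F : 'rV[R]_n -> Y) (G : 'rV[R]_n -> Y -> Z).
Hypotheses (adm : ap_admissible I) (Fuc : unif_cont_on I F) (Fap : bohr_ap I F).
Hypotheses (Guc : unif_cont_on2 I B G) (FB : forall t, I t -> B (F t)).
Hypothesis Gsec : forall y, B y -> bohr_ap I (G^~ y).

Lemma common_almost_periods (z : Z) (ss : seq 'rV[R]_n) : z != 0 ->
  forall eta, 0 < eta ->
  exists2 l, 0 < l & forall t0, I t0 -> exists tau,
    [/\ I tau, enorm (tau - t0) <= l & forall t, I t ->
      rnorm (F (t + tau) - F t) <= eta /\
      forall s, s \in ss -> I s -> rnorm (G (t + tau) (F s) - G t (F s)) <= eta].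
Proof.
move=> z_neq0 eta eta_gt0.
pose Ft := ap_extension I F; pose Gy y := ap_extension I (G^~ y).
pose d := foldr (fun s => pm_max (dist_fun (Gy (F s)))) (dist_fun Ft) ss.
have dB : bochner_ap d.
  apply: bochner_ap_foldr_max => [|s];
  by apply/bochner_ap_dist_fun/ap_extension_bohr_ap.
have [l l_gt0 periods] := admissible_pm_ap_in z_neq0 adm dB eta_gt0.
exists l => // t0 It0; have [tau [Itau tau_t0 d_tau]] := periods t0 It0.
exists tau; split=> // t It.
have Itt : I (t + tau) by have [_ [addI _]] := adm; exact: addI.
have [dF dG] := foldr_pm_max_ge (fun s => dist_fun (Gy (F s))) (dist_fun Ft) ss
  (t + tau) t.
have FtE := ap_extensionE adm Fuc Fap.
split=> [|s ss_s Is].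
  by have := le_trans dF (d_tau t); rewrite /dist_fun /Ft !FtE.
have GsE := ap_extensionE adm (unif_cont_on2_section Guc (FB Is)) (Gsec (FB Is)).
by have := le_trans (dG s ss_s) (d_tau t); rewrite /dist_fun /Gy !GsE.
Qed.

Lemma bohr_ap_comp (z : Z) : z != 0 -> bohr_ap I (fun t => G t (F t)).
Proof.
move=> z_neq0; split=> [|e e_gt0].
  exact: unif_cont_on_cont (unif_cont_on2_comp Guc Fuc FB).
have e2 : 0 < e / 2 by rewrite divr_gt0.
have [r r_gt0 G_incr] := unif_cont_on2_increment_le Guc e2.
have r2 : 0 < r / 2 by rewrite divr_gt0.
have [ss ss_net] := bohr_ap_range_net I (ap_extension_bohr_ap I F) r2.
have eta_gt0 : 0 < Num.min (r / 2) (e / 2) by rewrite lt_min r2 e2.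
have [l l_gt0 periods] := common_almost_periods ss z_neq0 eta_gt0.
exists l => // t0 It0; have [tau [Itau tau_t0 small]] := periods t0 It0.
exists tau; split=> // t It.
have Itt : I (t + tau) by have [_ [addI _]] := adm; exact: addI.
have [s [ss_s Is]] := ss_net t It; rewrite !(ap_extensionE adm Fuc Fap) // => Fts.
have [] := small t It; rewrite le_min => /andP[Ftau _] /(_ s ss_s Is).
rewrite le_min => /andP[_ Gtau].
have Ftau_s : rnorm (F (t + tau) - F s) < r.
  by have := rnorm_distD (F t) (F (t + tau)) (F s); lra.
have Ft_s : rnorm (F t - F s) < r by lra.
have := G_incr _ _ _ _ _ It Itt (FB It) (FB Itt) (FB Is) Ftau_s Ft_s.
by rewrite rnorm_le; lra.
Qed.

End AlmostPeriodicComposition.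

Unset Implicit Arguments.

Theorem theorem2p50 (R : realType) (n : nat)
  (Y Z : completeNormedModType R[i]) (BB : set (set Y))
  (I : set 'rV[R]_n) (F : 'rV[R]_n -> Y) (G : 'rV[R]_n -> Y -> Z) (B : set Y) :
  (forall B', BB B' -> B' !=set0) ->
  ap_admissible I ->
  unif_cont_on I F -> bohr_ap I F ->
  bohr_B_ap I BB G ->
  closure (F @` I) = B -> BB B ->
  unif_cont_on2 I B G ->
  unif_cont_on I (fun t => G t (F t)) /\ bohr_ap I (fun t => G t (F t)).
Proof.
move=> _ adm Fuc Fap Gap clB BB_B Guc.
have FB t : I t -> B (F t) by move=> It; rewrite -clB; apply: subset_closure; exists t.
split; first exact: unif_cont_on2_comp Guc Fuc FB.
(* The admissibility argument needs a nonzero vector of Z; if there is none,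
   W = 0. *)
have [[z z_neq0]|Z0] := pselect (exists z : Z, z != 0).
  exact: bohr_ap_comp adm Fuc Fap Guc FB (fun y => bohr_B_ap_section Gap BB_B) z z_neq0.
have -> : (fun t => G t (F t)) = fun=> 0.
  by apply/funext => t; apply: contrapT => /eqP W_neq0; apply: Z0; exists (G t (F t)).
exact: bohr_ap_cst.
Qed.
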